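(* Let $G$ be a finite group and $p$ a prime divisor of $|G|$. Suppose that $\mathrm{pr}^*_G(p,p')>\frac{p+q-1}{pq}$, where $q$ is the smallest prime in $\pi(G)\setminus\{p\}$. Then $G=O_p(G)\times O_{p'}(G)$.
   Context: For subsets $X,Y$ of a finite group $G$, $\Pr(X,Y)=|\{(x,y)\in X\times Y: xy=yx\}|/(|X||Y|)$. For sets of primes $\pi_1,\pi_2$, $\mathrm{pr}^*_G(\pi_1,\pi_2)$ denotes the maximum real number $\epsilon$ such that for every pair of distinct primes $r\in\pi_1$, $s\in\pi_2$ there exist a Sylow $r$-subgroup $R$ and a Sylow $s$-subgroup $S$ of $G$ with $\Pr(R,S)\ge\epsilon$ (the Sylow subgroup for a prime not dividing $|G|$ is trivial); $\mathrm{pr}^*_G(p,\pi_2)=\mathrm{pr}^*_G(\{p\},\pi_2)$. $p'$ denotes the set of primes different from $p$. $\pi(G)$ is the set of prime divisors of $|G|$. *)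

From mathcomp Require Import all_boot all_order all_algebra all_fingroup all_solvable.
Set Implicit Arguments. Unset Strict Implicit. Unset Printing Implicit Defensive.
Import Order.TTheory GRing.Theory Num.Theory.

Local Open Scope group_scope.

Definition commProb (gT : finGroupType) (X Y : {set gT}) : rat :=
  (#|[set xy in setX X Y | ((xy.1 * xy.2)%g == (xy.2 * xy.1)%g)]|%:R
    / (#|X| * #|Y|)%N%:R)%R.

(* pr*_G(pi1,pi2): the largest eps such that for all distinct primes r in pi1,
   s in pi2 there are Sylow r- and s-subgroups R, S with Pr(R,S) >= eps.
   It equals the minimum, over such pairs (r,s), of the maximum of Pr(R,S)
   over Sylow pairs.  Pairs with r or s not dividing |G| involve a trivial
   Sylow subgroup, hence contribute Pr = 1; since Pr <= 1 they can be omitted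
   from the minimum, which starts at 1. *)
Definition prstar (gT : finGroupType) (G : {group gT}) (pi1 pi2 : pred nat) : rat :=
  \big[Order.min/1%R]_(r <- primes #|G| | r \in pi1)
   \big[Order.min/1%R]_(s <- primes #|G| | (s \in pi2) && (s != r))
    \big[Order.max/0%R]_(R in 'Syl_r(G))
     \big[Order.max/0%R]_(S in 'Syl_s(G)) commProb R S.

From mathcomp Require Import all_boot all_order all_algebra all_fingroup all_solvable.
From mathcomp Require Import zify.
Set Implicit Arguments. Unset Strict Implicit. Unset Printing Implicit Defensive.
Import Order.TTheory GRing.Theory Num.Theory.

(* Let R be a p-subgroup and S an s-subgroup that do not commute elementwise.
   Then C_R(S) has index at least p in R, and for x outside C(S) the centraliser
   C_S[x] has index at least s in S; counting commuting pairs row by row gives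
   Pr(R,S) <= (p+s-1)/(ps) <= (p+q-1)/(pq).  So the hypothesis forces, for every
   prime s <> p, some Sylow s-subgroup to centralise a fixed Sylow p-subgroup P.
   Then C_G(P) has p-power index, which makes P normal; a Schur-Zassenhaus
   complement K of P is a p'-group whose image in the p-group G/C_G(P) is
   trivial, so K centralises P and G = P x K. *)

Local Open Scope group_scope.

Definition commProb_bound (p s : nat) : rat := ((p + s - 1)%:R / (p * s)%:R)%R.

Section CommutingPairs.

Variable gT : finGroupType.
Implicit Types R S H : {group gT}.

Lemma card_proper_pgroup p H S :
  prime p -> p.-group S -> H \proper S -> #|H| * p <= #|S|.
Proof.
move=> p_pr pS ltHS; have pH := pgroupS (proper_sub ltHS) pS.
rewrite (card_pgroup pS) (card_pgroup pH) -expnSr leq_exp2l ?prime_gt1 //.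
exact: properG_ltn_log.
Qed.

Lemma card_commuting_pairs R S :
  #|[set xy in setX R S | xy.1 * xy.2 == xy.2 * xy.1]| = \sum_(x in R) #|'C_S[x]|.
Proof.
rewrite -sum1_card -(eq_bigr _ (fun x _ => sum1_card _)) pair_big_dep.
by apply: eq_bigl => -[x y]; rewrite in_setI cent1E !inE /= eq_sym andbA.
Qed.

Lemma sum_card_cent1_le s R S :
  prime s -> s.-group S ->
  (\sum_(x in R) #|'C_S[x]|) * s <= #|'C_R(S)| * #|S| * s + #|R :\: 'C(S)| * #|S|.
Proof.
move=> s_pr sS; rewrite (big_setID 'C(S)) /= mulnDl leq_add //.
  rewrite leq_mul2r -sum_nat_const leq_sum ?orbT // => x _.
  by rewrite subset_leq_card ?subsetIl.
rewrite big_distrl -sum_nat_const leq_sum //= => x /setDP[_ not_cSx].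
by rewrite card_proper_pgroup // properE subsetIl subsetI subxx sub_cent1.
Qed.

Lemma commProb_le_bound p s R S :
  prime p -> prime s -> p.-group R -> s.-group S -> ~~ (R \subset 'C(S)) ->
  (commProb R S <= commProb_bound p s)%R.
Proof.
move=> p_pr s_pr pR sS not_cRS.
have le_CR : #|'C_R(S)| * p <= #|R|.
  by rewrite card_proper_pgroup // properE subsetIl subsetI subxx.
have le_sum := sum_card_cent1_le R s_pr sS.
rewrite /commProb /commProb_bound card_commuting_pairs.
rewrite ler_pdivrMr ?ltr0n ?muln_gt0 ?cardG_gt0 //.
rewrite mulrAC ler_pdivlMr ?ltr0n ?muln_gt0 ?prime_gt0 // -!natrM ler_nat.
rewrite -(cardsID 'C(S) R) in le_CR *.
case: s s_pr sS le_sum => // s _ _ le_sum; rewrite addnS subn1 /=.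
have := leq_mul le_sum (leqnn p).
have := leq_mul le_CR (leqnn (#|S| * s)).
move: (\sum_(x in R) _) #|'C_R(S)| #|R :\: _| #|S| => N A D z.
(* N (s+1) p <= z (A (s+1) p + D p) = z (A p s + (A + D) p) <= z (A + D) (s + p) *)
nia.
Qed.

End CommutingPairs.

Lemma commProb_bound_decr p q s :
  0 < p -> 0 < q <= s -> (commProb_bound p s <= commProb_bound p q)%R.
Proof.
move=> p_gt0 /andP[q_gt0 le_qs]; rewrite /commProb_bound.
rewrite ler_pdivrMr ?ltr0n ?muln_gt0 ?p_gt0 ?(leq_trans q_gt0) //.
rewrite mulrAC ler_pdivlMr ?ltr0n ?muln_gt0 ?p_gt0 // -!natrM ler_nat.
case: p p_gt0 => // p _; rewrite !addSn !subn1 /=.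
have := leq_mul (leqnn (p.+1 * p)) le_qs.
nia.
Qed.

Lemma bigmax_gt_witness d (T : orderType d) (I : finType) (P : pred I) (F : I -> T)
    x0 x :
  (x0 <= x)%O -> (x < \big[Order.max/x0]_(i | P i) F i)%O ->
  exists2 i, P i & (x < F i)%O.
Proof.
move=> le_x0x lt_x_max.
have [i /andP[Pi lt_xFi] | no_witness] := pickP (fun i => P i && (x < F i)%O).
  by exists i.
suff: (\big[Order.max/x0]_(i | P i) F i <= x)%O by rewrite leNgt lt_x_max.
apply: bigmax_le => // i Pi; rewrite leNgt; apply/negP => lt_xFi.
by have := no_witness i; rewrite /= Pi lt_xFi.
Qed.

Lemma prstar_gt_Sylows (gT : finGroupType) (G : {group gT}) pi1 pi2 r s b :
  r \in primes #|G| -> r \in pi1 -> s \in primes #|G| -> s \in pi2 -> s != r ->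
  (0 <= b)%R -> (b < prstar G pi1 pi2)%R ->
  exists2 R : {group gT}, r.-Sylow(G) R &
    exists2 S : {group gT}, s.-Sylow(G) S & (b < commProb R S)%R.
Proof.
move=> rG r_pi1 sG s_pi2 neq_sr b_ge0.
move/lt_le_trans/(_ (ge_bigmin_seq _ _ _ _ rG r_pi1)).
move/lt_le_trans/(_ (ge_bigmin_seq _ _ (fun s => (s \in pi2) && (s != r)) _ sG _)).
rewrite s_pi2 neq_sr => /(_ isT) /(bigmax_gt_witness b_ge0)[R].
rewrite inE => sylR /(bigmax_gt_witness b_ge0)[S].
by rewrite inE => sylS ltRS; exists R => //; exists S.
Qed.

Section CentralisedSylow.

Variables (gT : finGroupType) (G P : {group gT}) (p : nat).
Hypothesis sylP : p.-Sylow(G) P.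

Lemma pnat_indexg_Sylows_sub (C : {group gT}) :
  C \subset G ->
  (forall s, s \in primes #|G| -> s != p ->
     exists2 S : {group gT}, s.-Sylow(G) S & S \subset C) ->
  p.-nat #|G : C|.
Proof.
move=> sCG Sylows_sub; apply/pnatP=> // s s_pr s_dvd; apply/negPn/negP=> s_p'.
have sG : s \in primes #|G|.
  by rewrite mem_primes s_pr cardG_gt0 (dvdn_trans s_dvd) ?dvdn_indexg.
have [S /and3P[_ _ s'_index] sSC] := Sylows_sub s sG s_p'.
by move: s'_index; rewrite (p'natE _ s_pr) (dvdn_trans s_dvd) ?indexgS.
Qed.

Section PnatIndexCent.

Hypothesis pnat_index_cent : p.-nat #|G : 'C_G(P)|.

Lemma Sylow_normal_of_pnat_indexg_cent : P <| G.
Proof.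
have sPG := pHall_sub sylP.
have sPN : P \subset 'N_G(P) by rewrite subsetI sPG normG.
have pN : p.-nat #|G : 'N_G(P)|.
  by apply: pnat_dvd pnat_index_cent; rewrite indexgS // setIS ?cent_sub.
have p'N : p^'.-nat #|G : 'N_G(P)|.
  by apply: pnat_dvd (indexgS G sPN) _; case/and3P: sylP.
have /eqP := pnat_1 pN p'N; rewrite indexg_eq1 => sGN.
by rewrite /normal sPG (subset_trans sGN) ?subsetIr.
Qed.

Lemma p'group_cents_Sylow (K : {group gT}) :
  K \subset G -> p^'.-group K -> K \subset 'C(P).
Proof.
move=> sKG p'K; have nPG := Sylow_normal_of_pnat_indexg_cent.
have nCG : G \subset 'N('C_G(P)) by rewrite normsI ?normG ?norms_cent ?normal_norm.
have pGC : p.-group (G / 'C_G(P)) by rewrite /pgroup card_quotient.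
have pKC : p.-group (K / 'C_G(P)) := pgroupS (quotientS _ sKG) pGC.
have trivKC := card1_trivg (pnat_1 pKC (quotient_pgroup _ p'K)).
apply: subset_trans (subsetIr G _).
by rewrite -(quotient_sub1 (subset_trans sKG nCG)) trivKC.
Qed.

Lemma pcore_dprod_of_pnat_indexg_cent : 'O_p(G) \x 'O_p^'(G) = G.
Proof.
have nPG := Sylow_normal_of_pnat_indexg_cent.
have OpP : 'O_p(G) = P := normal_Hall_pcore sylP nPG.
have [K compK] := splitsP (SchurZassenhaus_split (pHall_Hall sylP) nPG).
have defG : P ><| K = G by apply/(sdprod_normal_complP nPG); rewrite complgC.
have hallK : p^'.-Hall(G) K by apply/sdprod_Hall_pcoreP; rewrite OpP.
have sKG := pHall_sub hallK.
have cPK := p'group_cents_Sylow sKG (pHall_pgroup hallK).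
have nKG : K <| G.
  by rewrite /normal sKG -(sdprodW defG) mul_subG ?normG ?cents_norm 1?centsC.
by rewrite OpP (normal_Hall_pcore hallK nKG) dprodEsd.
Qed.

End PnatIndexCent.

Lemma pcore_dprod_of_cent_Sylows :
  (forall s, s \in primes #|G| -> s != p ->
     exists2 S : {group gT}, s.-Sylow(G) S & S \subset 'C(P)) ->
  'O_p(G) \x 'O_p^'(G) = G.
Proof.
move=> cent_Sylows; apply: pcore_dprod_of_pnat_indexg_cent.
apply: pnat_indexg_Sylows_sub (subsetIl G _) _ => s sG s_p'.
have [S sylS cPS] := cent_Sylows s sG s_p'.
by exists S; rewrite // subsetI (pHall_sub sylS).
Qed.

End CentralisedSylow.

Theorem proposition3p2 (gT : finGroupType) (G : {group gT}) (p q : nat) :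
  prime p -> p %| #|G| ->
  q \in primes #|G| -> q != p ->
  (forall r, r \in primes #|G| -> r != p -> q <= r) ->
  ((p + q - 1)%:R / (p * q)%:R < prstar G (pred1 p) (predC1 p))%R ->
  ('O_p(G) \x 'O_p^'(G))%g = G.
Proof.
move=> p_pr p_dvd qG _ q_min lt_bound.
have [P sylP] := Sylow_exists p G.
have q_pr := allP (all_prime_primes _) q qG.
have pG : p \in primes #|G| by rewrite mem_primes p_pr cardG_gt0.
have bound_ge0 : (0 <= commProb_bound p q)%R by rewrite divr_ge0.
apply: (pcore_dprod_of_cent_Sylows sylP) => s sG s_p'.
have s_pr := allP (all_prime_primes _) s sG.
have [R sylR [S sylS lt_RS]] :=
  prstar_gt_Sylows pG (eqxx p : p \in pred1 p) sG s_p' s_p' bound_ge0 lt_bound.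
have cRS : R \subset 'C(S).
  apply: contraLR lt_RS => not_cRS; rewrite -leNgt.
  have [pR sS] := (pHall_pgroup sylR, pHall_pgroup sylS).
  apply: le_trans (commProb_le_bound p_pr s_pr pR sS not_cRS) _.
  by rewrite commProb_bound_decr ?prime_gt0 ?q_min.
have [x xG ->] := Sylow_trans sylR sylP.
by exists (S :^ x)%G; rewrite ?pHallJ // centJ conjSg centsC.
Qed.
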